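(* Let $M\in\mathbb{N}_0$ and $N\in\mathbb{N}$ with $N\le\lfloor M/2\rfloor+1$. Let $U_{(N,M)}\in\mathbb{R}^{N\times N}$ be the upper triangular matrix with entries $(U_{(N,M)})_{N-\ell,N-\ell-k}=0$ for $1\le k\le N-1-\ell$, and $$(U_{(N,M)})_{N-\ell,N-\ell+k}=\frac{1}{(2k+1)2^{2k}}\binom{M-2\ell+2k}{2k},\qquad 0\le k\le\ell,$$ for $0\le\ell\le N-1$ (so the diagonal entries, $k=0$, equal $1$). Then $U_{(N,M)}^{-1}$ is upper unitriangular with entries $(U^{-1}_{(N,M)})_{N-\ell,N-\ell-k}=0$ for $1\le k\le N-1-\ell$ and $$(U^{-1}_{(N,M)})_{N-\ell,N-\ell+k}=\tau_{2k}\frac{(M-2\ell+2k)!}{(M-2\ell)!},\qquad 0\le k\le\ell,\ 0\le\ell\le N-1,$$ where $\tau_0=1$ and $\tau_{2k}=\sum_{s=0}^{k-1}\frac{-\tau_{2s}}{2^{2k-2s}(2k-2s+1)!}$ for $k>0$. *)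

From HB Require Import structures.
From mathcomp Require Import all_boot all_order all_algebra.
Set Implicit Arguments. Unset Strict Implicit. Unset Printing Implicit Defensive.
Import Order.TTheory GRing.Theory Num.Theory.
Local Open Scope ring_scope.

(* Indices: the paper uses 1-based indices 1..N; here 'I_N is 0-based.
   Row N-l (1-based) is row i = N-1-l (0-based), i.e. l = N-1-i;
   column N-l+k (1-based) is column j = i+k, i.e. k = j-i. *)

Fixpoint taus (R : fieldType) (n : nat) : seq R :=
  match n with
  | 0 => [:: 1]
  | n'.+1 =>
      let t := taus R n' in
      rcons t (\sum_(s < n'.+1)
                 (- nth 0 t s) /
                 ((2 ^+ (2 * (n'.+1 - s))) * ((2 * (n'.+1 - s) + 1)`!)%:R))
  end.

(* tau R k = tau_{2k} of the paper *)
Definition tau (R : fieldType) (k : nat) : R := nth 0 (taus R k) k.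

Definition Umx (R : fieldType) (N M : nat) : 'M[R]_N :=
  \matrix_(i < N, j < N)
    if (i <= j)%N then
      let l := (N - 1 - i)%N in let k := (j - i)%N in
      ('C(M - 2 * l + 2 * k, 2 * k))%:R / (((2 * k + 1)%:R) * 2 ^+ (2 * k))
    else 0.

Definition Uinvmx (R : fieldType) (N M : nat) : 'M[R]_N :=
  \matrix_(i < N, j < N)
    if (i <= j)%N then
      let l := (N - 1 - i)%N in let k := (j - i)%N in
      tau R k * (((M - 2 * l + 2 * k)`!)%:R / ((M - 2 * l)`!)%:R)
    else 0.

From HB Require Import structures.
From mathcomp Require Import all_boot all_order all_algebra.
From mathcomp Require Import ring zify.

Set Implicit Arguments.
Unset Strict Implicit.
Unset Printing Implicit Defensive.
Import Order.TTheory GRing.Theory Num.Theory.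
Local Open Scope ring_scope.

(* Both U and the claimed inverse are conjugates D^-1 T D of upper triangular
   Toeplitz matrices by D = diag((M - 2l)!): their (i, j) entries factor as
   a_(j-i) * d_j / d_i, with a_k = 1 / ((2k+1)! 4^k) for U and a_k = tau_2k for
   the inverse.  Such products multiply by convolving the symbols, and the
   recursion defining tau says exactly that sum_p a_p tau_2(n-p) vanishes for
   n > 0.  The bound N <= M/2 + 1 keeps every M - 2l nonnegative, so that the
   truncated subtractions in the entries really satisfy
   (M - 2l) + 2k = M - 2(l - k). *)

Section UpperToeplitz.

Variable R : fieldType.

Definition upper_toeplitz_mx N (w f : nat -> R) : 'M[R]_N :=
  \matrix_(i, j) if (i <= j)%N then f (j - i)%N * (w j / w i) else 0.

Definition convn (f g : nat -> R) (n : nat) : R :=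
  \sum_(p < n.+1) f p * g (n - p)%N.

Lemma mul_upper_toeplitz_mx N (w f g : nat -> R) :
  (forall i, (i < N)%N -> w i != 0) ->
  upper_toeplitz_mx N w f *m upper_toeplitz_mx N w g =
  upper_toeplitz_mx N w (convn f g).
Proof.
move=> w_neq0; apply/matrixP => i j; rewrite !mxE.
pose h m : R := if (i <= m <= j)%N then f (m - i)%N * g (j - m)%N else 0.
have -> : \sum_(m < N) upper_toeplitz_mx N w f i m * upper_toeplitz_mx N w g m j
          = \sum_(m < N) h m * (w j / w i).
  apply: eq_bigr => m _; rewrite !mxE /h.
  case: (leqP i m) => [im|]; last by rewrite !mul0r.
  case: (leqP m j) => [mj|]; last by rewrite !mulr0 mul0r.
  by rewrite mulrACA; congr (_ * _); rewrite mulrC mulrA divfK ?w_neq0.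
rewrite -mulr_suml.
case: (leqP i j) => [ij|ji]; last first.
  rewrite big1 ?mul0r // => m _; rewrite /h; case: leqP => //= im.
  by rewrite leqNgt (leq_trans ji im).
congr (_ * _); rewrite -(big_mkord xpredT).
have -> : \sum_(0 <= m < N) h m = \sum_(i <= m < j.+1) f (m - i)%N * g (j - m)%N.
  symmetry; rewrite (big_nat_widen i j.+1 N) // (big_nat_widenl i 0) // big_mkcond /=.
  by apply: eq_bigr => m _; rewrite /h ltnS andbC.
rewrite -{1}[i : nat]add0n big_addn /convn big_mkord.
by rewrite subSn //; apply: eq_bigr => p _; rewrite addnK subnDA subnAC.
Qed.

Lemma upper_toeplitz_mx_delta N (w f : nat -> R) :
  (forall i, (i < N)%N -> w i != 0) -> f =1 (fun n => (n == 0)%:R) ->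
  upper_toeplitz_mx N w f = 1%:M.
Proof.
move=> w_neq0 f_delta; apply/matrixP => i j; rewrite !mxE !f_delta.
have [->|neq_ij] := eqVneq i j; first by rewrite leqnn subnn mul1r divff ?w_neq0.
case: leqP => [ij|//].
have lt_ij : (i < j)%N by rewrite ltn_neqAle ij andbT.
by rewrite subn_eq0 leqNgt lt_ij mul0r.
Qed.

End UpperToeplitz.

Lemma size_taus (R : fieldType) n : size (taus R n) = n.+1.
Proof. by elim: n => //= n IH; rewrite size_rcons IH. Qed.

Lemma nth_taus (R : fieldType) n s : (s <= n)%N -> nth 0 (taus R n) s = tau R s.
Proof.
elim: n => [|n IH]; first by rewrite leqn0 => /eqP ->.
rewrite leq_eqVlt => /orP[/eqP -> //|lt_sn].
by rewrite /= nth_rcons size_taus lt_sn IH.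
Qed.

Definition ucoef (R : fieldType) (k : nat) : R :=
  (((2 * k + 1)`!)%:R * 2 ^+ (2 * k))^-1.

Lemma tauS (R : fieldType) n :
  tau R n.+1 = - \sum_(s < n.+1) ucoef R (n.+1 - s) * tau R s.
Proof.
rewrite {1}/tau /= nth_rcons size_taus ltnn eqxx -sumrN.
apply: eq_bigr => s _; rewrite (@nth_taus _ _ _ (leq_ord s)) /ucoef.
by rewrite mulNr mulrC [_ * 2 ^+ _]mulrC.
Qed.

Lemma ucoef0 (R : fieldType) : ucoef R 0 = 1.
Proof. by rewrite /ucoef muln0 expr0 mulr1 invr1. Qed.

Lemma convn_ucoef_tau (R : fieldType) n :
  convn (ucoef R) (tau R) n = (n == 0)%:R.
Proof.
rewrite /convn big_ord_recl ucoef0 mul1r subn0.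
case: n => [|n]; first by rewrite big_ord0 addr0.
rewrite tauS (reindex_inj rev_ord_inj) /=; apply/eqP; rewrite addrC subr_eq0; apply/eqP.
apply: eq_bigr => s _; have s_le_n := leq_ord s.
by rewrite /bump /= subSS subSn ?leq_subr // subKn // add1n.
Qed.

Lemma bin_ucoef (R : numFieldType) b k :
  ('C(b + 2 * k, 2 * k))%:R / ((2 * k + 1)%:R * 2 ^+ (2 * k)) =
  ucoef R k * (((b + 2 * k)`!)%:R / (b`!)%:R) :> R.
Proof.
have := bin_fact (leq_addl b (2 * k)); rewrite addnK => <-.
rewrite /ucoef addn1 factS !natrM.
have nz_pos m : (0 < m)%N -> m%:R != 0 :> R by rewrite pnatr_eq0 -lt0n.
have nzC : ('C(b + 2 * k, 2 * k))%:R != 0 :> R by rewrite nz_pos // bin_gt0 leq_addl.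
have nz_fact m : (m`!)%:R != 0 :> R by rewrite nz_pos ?fact_gt0.
have nz_pow2 : (2 : R) ^+ (2 * k) != 0 by rewrite expf_neq0 ?nz_pos.
by field; rewrite !nz_fact nz_pow2 -natrM nat1r nz_pos.
Qed.

Definition Uweight (R : numFieldType) (N M i : nat) : R := ((M - 2 * (N - 1 - i))`!)%:R.

Lemma Uweight_neq0 (R : numFieldType) N M i : Uweight R N M i != 0.
Proof. by rewrite pnatr_eq0 -lt0n fact_gt0. Qed.

Section UmxToeplitz.

Variables (R : numFieldType) (N M : nat).
Hypothesis le_2N_M : (2 * (N - 1) <= M)%N.

Let weight_shift (i j : 'I_N) : (i <= j)%N ->
  (M - 2 * (N - 1 - i) + 2 * (j - i) = M - 2 * (N - 1 - j))%N.
Proof. by move=> ij; have := ltn_ord j; lia. Qed.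

Lemma Umx_upper_toeplitz : Umx R N M = upper_toeplitz_mx N (Uweight R N M) (ucoef R).
Proof.
apply/matrixP => i j; rewrite !mxE; case: leqP => // ij.
by rewrite /= bin_ucoef /Uweight weight_shift.
Qed.

Lemma Uinvmx_upper_toeplitz : Uinvmx R N M = upper_toeplitz_mx N (Uweight R N M) (tau R).
Proof.
apply/matrixP => i j; rewrite !mxE; case: leqP => // ij.
by rewrite /= /Uweight weight_shift.
Qed.

End UmxToeplitz.

Theorem lemma5 (R : realFieldType) (M N : nat) (hN : (0 < N)%N)
  (hNM : (N <= M./2 + 1)%N) :
  Umx R N M \in unitmx /\ invmx (Umx R N M) = Uinvmx R N M.
Proof.
have le_2N_M : (2 * (N - 1) <= M)%N by have := odd_double_half M; rewrite -muln2; lia.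
have U_Uinv : Umx R N M *m Uinvmx R N M = 1%:M.
  rewrite Umx_upper_toeplitz // Uinvmx_upper_toeplitz // mul_upper_toeplitz_mx.
    by apply: upper_toeplitz_mx_delta => [i _|n]; rewrite ?Uweight_neq0 ?convn_ucoef_tau.
  by move=> i _; apply: Uweight_neq0.
have [U_unit _] := mulmx1_unit U_Uinv.
by split=> //; rewrite -[RHS](mulKmx U_unit) U_Uinv mulmx1.
Qed.
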